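(* The restricted wave cone $\Lambda'$ is dense in the wave cone $\Lambda$.
   Context: Let $n\ge2$, $\mathcal S_0^{n\times n}$ the trace-free symmetric $n\times n$ matrices, $Z:=\mathbb{R}\times\mathbb{R}^n\times\mathbb{R}^n\times\mathcal S_0^{n\times n}\times\mathbb{R}$ with elements $\bar z=(\bar\rho,\bar v,\bar m,\bar\sigma,\bar p)$. Define the $(n+2)\times(n+1)$ matrix $M_\Lambda(\bar z):=\begin{pmatrix}\bar\sigma+\bar p\,\mathrm{Id}&\bar v\\ \bar v^T&0\\ \bar m^T&\bar\rho\end{pmatrix}$, the wave cone $\Lambda:=\{\bar z\in Z:\ker M_\Lambda(\bar z)\neq\{0\},\ (\bar\rho,\bar v)\neq0\}$, and $\Lambda':=\{\bar z\in\Lambda:\ker M_\Lambda(\bar z)\cap(\mathbb{R}^n\times(\mathbb{R}\setminus\{0\}))\neq\emptyset\}$. *)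

From HB Require Import structures.
From mathcomp Require Import all_boot all_order all_algebra.
Set Implicit Arguments. Unset Strict Implicit. Unset Printing Implicit Defensive.
Import Order.TTheory GRing.Theory Num.Theory.
Local Open Scope ring_scope.

(* Membership of sigma in the trace-free symmetric matrices S_0 is the
   predicate [in_Z]. *)
Record Zel (R : realFieldType) (n : nat) := MkZ {
  zrho : R; zv : 'cV[R]_n; zm : 'cV[R]_n; zsigma : 'M[R]_n; zp : R }.

Definition in_Z (R : realFieldType) (n : nat) (z : Zel R n) : Prop :=
  (zsigma z)^T = zsigma z /\ \tr (zsigma z) = 0.

Definition MLambda (R : realFieldType) (n : nat) (z : Zel R n)
  : 'M[R]_(n + 1 + 1, n + 1) :=
  col_mx (col_mx (row_mx (zsigma z + (zp z)%:M) (zv z))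
                 (row_mx (zv z)^T (0 : 'M[R]_1)))
         (row_mx (zm z)^T ((zrho z)%:M : 'M[R]_1)).

Definition Lambda (R : realFieldType) (n : nat) (z : Zel R n) : Prop :=
  in_Z z /\
  (exists x : 'cV[R]_(n + 1), x != 0 /\ MLambda z *m x = 0) /\
  (zrho z != 0 \/ zv z != 0).

Definition Lambda' (R : realFieldType) (n : nat) (z : Zel R n) : Prop :=
  Lambda z /\
  (exists (y : 'cV[R]_n) (t : R), t != 0 /\ MLambda z *m col_mx y t%:M = 0).

(* Closeness in Z (max-norm over all coordinates; Z is finite-dimensional,
   so this induces the standard topology). *)
Definition Zclose (R : realFieldType) (n : nat) (z z' : Zel R n) (e : R) : Prop :=
  [/\ `|zrho z - zrho z'| < e,
      (forall i, `|zv z i 0 - zv z' i 0| < e),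
      (forall i, `|zm z i 0 - zm z' i 0| < e),
      (forall i j, `|zsigma z i j - zsigma z' i j| < e)
    & `|zp z - zp z'| < e].

From HB Require Import structures.
From mathcomp Require Import all_boot all_order all_algebra.
From mathcomp Require Import reals.

Set Implicit Arguments.
Unset Strict Implicit.
Unset Printing Implicit Defensive.
Import Order.TTheory GRing.Theory Num.Theory.
Local Open Scope ring_scope.

(* If the kernel of M_Lambda(z) meets R^n x (R \ {0}) there is nothing to do.
   Otherwise it contains some (y, 0) with y <> 0, i.e. (sigma + p Id) y = 0,
   v.y = 0 and m.y = 0.  Moving sigma by -d (v y^T + y v^T), which stays
   symmetric and trace-free because v.y = 0, and m by -d rho y puts
   (y, d |y|^2) in the kernel; for d > 0 small the perturbation is as small
   as we like. *)

Lemma trmx_mul_self_eq0 (R : realFieldType) (n : nat) (y : 'cV[R]_n) :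
  ((y^T *m y) 0 0 == 0) = (y == 0).
Proof.
have sqr_ge0_y i : 0 <= y i 0 ^+ 2 by exact: sqr_ge0.
rewrite mxE (eq_bigr (fun i => y i 0 ^+ 2)) => [|i _]; last by rewrite mxE expr2.
apply/idP/eqP=> [/eqP y2_0 | ->]; last by rewrite big1 // => i _; rewrite mxE expr0n.
apply/matrixP=> i j; rewrite (ord1 j) mxE; apply/eqP; rewrite -sqrf_eq0.
by apply/eqP; apply: (psumr_eq0P _ y2_0).
Qed.

Lemma small_multiple (R : realFieldType) (I : finType) (a : I -> R) (e : R) :
  0 < e -> exists2 d, 0 < d & forall k, d * `|a k| < e.
Proof.
move=> e_gt0; set S := \sum_k `|a k|.
have S_ge0 : 0 <= S by rewrite sumr_ge0.
exists (e / (1 + S)) => [|k]; first by rewrite divr_gt0 ?ltr_pwDl.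
rewrite mulrAC ltr_pdivrMr ?ltr_pwDl // ltr_pM2l // ltr_pwDl //.
by rewrite /S (bigD1 k) //= lerDl sumr_ge0.
Qed.

Section WaveCone.

Variables (R : realFieldType) (n : nat).
Implicit Types (z : Zel R n) (y : 'cV[R]_n) (d e : R).

Lemma MLambda_col_mx_eq0 z y (s : 'M[R]_1) :
  MLambda z *m col_mx y s = 0 <->
  [/\ (zsigma z + (zp z)%:M) *m y + zv z *m s = 0,
      (zv z)^T *m y = 0 &
      (zm z)^T *m y + (zrho z)%:M *m s = 0].
Proof.
rewrite /MLambda !mul_col_mx !mul_row_col mul0mx addr0.
split=> [/eqP | [-> -> ->]]; last by rewrite !col_mx0.
by rewrite !col_mx_eq0 -andbA => /and3P[/eqP-> /eqP-> /eqP->].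
Qed.

Lemma Lambda_kernel_cases z :
  Lambda z -> Lambda' z \/ exists2 y, y != 0 & MLambda z *m col_mx y (0 : 'M_1) = 0.
Proof.
move=> Lz; have [_ [[x [x_neq0 Mx0]] _]] := Lz.
rewrite -[x]vsubmxK [dsubmx x]mx11_scalar in x_neq0 Mx0.
have [t0 | t_neq0] := eqVneq (dsubmx x 0 0) 0.
  right; exists (usubmx x); last by rewrite t0 raddf0 in Mx0.
  by apply: contra x_neq0 => /eqP->; rewrite t0 raddf0 col_mx0.
by left; split=> //; exists (usubmx x), (dsubmx x 0 0).
Qed.

Definition perturb z y d : Zel R n :=
  MkZ (zrho z) (zv z) (zm z - (d * zrho z) *: y)
      (zsigma z - d *: (zv z *m y^T + y *m (zv z)^T)) (zp z).

Lemma in_Z_perturb z y d :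
  in_Z z -> (zv z)^T *m y = 0 -> in_Z (perturb z y d).
Proof.
move=> [sym_sigma tr_sigma] vy0; split=> /=.
  by rewrite linearB linearZ linearD /= !trmx_mul !trmxK sym_sigma (addrC (y *m _)).
rewrite linearB linearZ /= mxtraceD tr_sigma -[\tr (zv z *m _)]mxtrace_tr.
by rewrite trmx_mul trmxK mxtrace_mulC vy0 mxtrace0 addr0 mulr0 subr0.
Qed.

Lemma perturb_kernel z y d :
  MLambda z *m col_mx y (0 : 'M_1) = 0 ->
  MLambda (perturb z y d) *m col_mx y (d *: (y^T *m y)) = 0.
Proof.
move/MLambda_col_mx_eq0; rewrite !mulmx0 !addr0 => -[sigma_y vy0 my0].
apply/MLambda_col_mx_eq0; split=> //.
  rewrite addrAC mulmxBl sigma_y sub0r -scalemxAl mulmxDl -!mulmxA vy0.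
  by rewrite mulmx0 addr0 -scalemxAr addNr.
rewrite linearB linearZ /= mulmxBl my0 sub0r -scalemxAl mul_scalar_mx.
by rewrite scalerA mulrC addNr.
Qed.

Lemma Lambda'_perturb z y d :
  Lambda z -> y != 0 -> d != 0 -> MLambda z *m col_mx y (0 : 'M_1) = 0 ->
  Lambda' (perturb z y d).
Proof.
move=> [Zz [_ rho_v_neq0]] y_neq0 d_neq0 My0.
have /MLambda_col_mx_eq0[_ vy0 _] := My0.
have Mpy := perturb_kernel d My0.
have t_neq0 : d * (y^T *m y) 0 0 != 0 by rewrite mulf_neq0 ?trmx_mul_self_eq0.
have t_scalar : d *: (y^T *m y) = (d * (y^T *m y) 0 0)%:M.
  by rewrite [y^T *m y in LHS]mx11_scalar scale_scalar_mx.
split; last by exists y, (d * (y^T *m y) 0 0); rewrite -t_scalar.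
split; first exact: in_Z_perturb.
split=> //; exists (col_mx y (d *: (y^T *m y))); split=> //.
by rewrite col_mx_eq0 negb_and y_neq0.
Qed.

Lemma Zclose_refl z e : 0 < e -> Zclose z z e.
Proof. by move=> e_gt0; split=> *; rewrite subrr normr0. Qed.

Lemma Zclose_perturb z y d e :
  0 < e -> 0 <= d ->
  (forall i, d * `|zrho z * y i 0| < e) ->
  (forall i j, d * `|zv z i 0 * y j 0 + y i 0 * zv z j 0| < e) ->
  Zclose z (perturb z y d) e.
Proof.
move=> e_gt0 d_ge0 small_m small_sigma.
split=> [|i|i|i j|] /=; rewrite ?subrr ?normr0 //.
  by rewrite !mxE opprB addrCA subrr addr0 -mulrA normrM ger0_norm.
by rewrite !mxE !big_ord1 !mxE opprB addrCA subrr addr0 normrM ger0_norm.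
Qed.

End WaveCone.

Theorem lemma3p1 (R : realType) (n : nat) (hn : (2 <= n)%N) (z : Zel R n) :
  Lambda z -> forall e : R, 0 < e -> exists z' : Zel R n, Lambda' z' /\ Zclose z z' e.
Proof.
move=> Lz e e_gt0.
have [L'z | [y y_neq0 My0]] := Lambda_kernel_cases Lz.
  by exists z; split; last exact: Zclose_refl.
pose a (k : 'I_n + 'I_n * 'I_n) := match k with
  | inl i => zrho z * y i 0
  | inr (i, j) => zv z i 0 * y j 0 + y i 0 * zv z j 0 end.
have [d d_gt0 small_a] := small_multiple a e_gt0.
exists (perturb z y d); split.
  exact: Lambda'_perturb Lz y_neq0 (lt0r_neq0 d_gt0) My0.
apply: Zclose_perturb => // [|i|i j]; first exact: ltW.
  exact: (small_a (inl i)).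
exact: (small_a (inr (i, j))).
Qed.
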